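(* Let $M\subseteq\mathbb{C}^2$ be a set of pairwise distinct vectors, let $\mu:\mathbb{C}^2\otimes\mathbb{C}^2\to\mathbb{C}^2$ be a linear map that is associative, i.e. $\mu\circ(\mu\otimes\mathrm{id}) = \mu\circ(\mathrm{id}\otimes\mu)$, and let $e\in M$ be a unit for $\mu$, i.e. $\mu(e\otimes m) = m = \mu(m\otimes e)$ for all $m\in M$. Then the monoid $(M,\mu)$ is commutative: $\mu(a\otimes b) = \mu(b\otimes a)$ for all $a,b\in M$.
   Context: Such a triple $(M,\mu,e)$ is called a monoid over $\mathbb{H}=\mathbb{C}^2$. *)

From mathcomp Require Import all_boot all_algebra complex.
From mathcomp Require Import reals.
Set Implicit Arguments. Unset Strict Implicit. Unset Printing Implicit Defensive.
Local Open Scope ring_scope.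

(* The complex numbers are modelled as R[i] for R : realType (the reals).
   H = C^2 is the space of row vectors 'rV[R[i]]_2, and
   H (x) H = C^2 (x) C^2 is identified with 'rV[R[i]]_(2 * 2) via mxvec. *)
Notation H R := 'rV[R[i]]_2.
Notation HH R := 'rV[R[i]]_(2 * 2).

Definition tens (R : realType) (a b : H R) : HH R := mxvec (a^T *m b).

(* The commutator c(x, y) = mu(x (x) y) - mu(y (x) x) is an alternating bilinear
   map on the plane, so c(x, y) = det(x, y) c(e_0, e_1).  A two-sided unit e gives
   c(e, a) = c(e, b) = 0.  Hence either c = 0, or det(e, a) = det(e, b) = 0; in the
   latter case a and b lie on the line through e, so det(a, b) = 0 (when e = 0,
   a = mu(e (x) a) = 0). *)
From HB Require Import structures.
From mathcomp Require Import all_boot all_algebra complex.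
From mathcomp Require Import reals.
From mathcomp Require Import ring.
Set Implicit Arguments. Unset Strict Implicit. Unset Printing Implicit Defensive.
Import GRing.Theory.
Local Open Scope ring_scope.

Section Commutator.
Variables (R : nzRingType) (U V : lmodType R) (g : {bilinear U -> U -> V}).

Definition commutator x y := g x y - g y x.

Lemma commutator_is_bilinear :
  bilinear_for (GRing.Scale.Law.clone _ _ *:%R _) (GRing.Scale.Law.clone _ _ *:%R _)
    commutator.
Proof.
by split=> [y|x] a u v /=;
  rewrite /commutator linearPl linearPr scalerBr addrACA opprD.
Qed.

HB.instance Definition _ :=
  bilinear_isBilinear.Build R U U V _ _ commutator commutator_is_bilinear.

Lemma commutator_xx x : commutator x x = 0.
Proof. exact: subrr. Qed.

End Commutator.

Section Plane.
Variable F : fieldType.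
Implicit Types u v e a b : 'rV[F]_2.

Definition det2 u v : F := u 0 0 * v 0 1 - u 0 1 * v 0 0.

Lemma row2_eq u v : u 0 0 = v 0 0 -> u 0 1 = v 0 1 -> u = v.
Proof.
move=> e0 e1; apply/rowP => -[[|[|//]] lt_j2].
  by rewrite (_ : Ordinal lt_j2 = 0) //; apply: val_inj.
by rewrite (_ : Ordinal lt_j2 = 1) //; apply: val_inj.
Qed.

Lemma row2E u : u = u 0 0 *: 'e_0 + u 0 1 *: 'e_1.
Proof.
rewrite {1}[u]row_sum_delta !big_ord_recl big_ord0 addr0.
have -> : lift ord0 ord0 = 1 :> 'I_2 by apply: val_inj.
by have -> : ord0 = 0 :> 'I_2 by apply: val_inj.
Qed.

Lemma det2_cramer e a b : det2 a b *: e = det2 e b *: a - det2 e a *: b.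
Proof. by apply: row2_eq; rewrite !mxE /det2; ring. Qed.

End Plane.

Section AlternatingPlane.
Variables (F : fieldType) (V : lmodType F).
Variable f : {bilinear 'rV[F]_2 -> 'rV[F]_2 -> V}.
Hypothesis f_alt : forall x, f x x = 0.

Lemma alternating_skew x y : f y x = - f x y.
Proof.
apply/eqP; rewrite -subr_eq0 opprK addrC; apply/eqP.
have := f_alt (x + y).
by rewrite linearDl !linearDr !f_alt add0r addr0.
Qed.

Lemma alternating2E x y : f x y = det2 x y *: f 'e_0 'e_1.
Proof.
rewrite {1}[x]row2E {1}[y]row2E !linearDl !linearDr !linearZl !linearZr /=.
rewrite !f_alt [f 'e_1 'e_0]alternating_skew !scaler0 add0r addr0.
by rewrite !scalerA scalerN -scaleNr -scalerDl.
Qed.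

Lemma alternating2_eq0 e a b : e != 0 -> f e a = 0 -> f e b = 0 -> f a b = 0.
Proof.
move=> nz_e; rewrite (alternating2E e a) (alternating2E e b) (alternating2E a b).
have [-> _ _|nz_w /eqP + /eqP] := eqVneq (f 'e_0 'e_1) 0; first by rewrite scaler0.
rewrite !scaler_eq0 (negPf nz_w) !orbF => /eqP ea /eqP eb.
have /eqP : det2 a b *: e = 0 by rewrite det2_cramer ea eb !scale0r subrr.
by rewrite scaler_eq0 (negPf nz_e) orbF => /eqP ->; rewrite scale0r.
Qed.

End AlternatingPlane.

Lemma unital_plane_commutative (F : fieldType)
    (g : {bilinear 'rV[F]_2 -> 'rV[F]_2 -> 'rV[F]_2}) (e a b : 'rV[F]_2) :
  g e a = a -> g a e = a -> g e b = b -> g b e = b -> g a b = g b a.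
Proof.
move=> gea gae geb gbe; apply/eqP; rewrite -subr_eq0; apply/eqP.
have [e0|nz_e] := eqVneq e 0.
  by rewrite -gea e0 !(linear0l, linear0r) subrr.
have unit_comm x : g e x = x -> g x e = x -> commutator g e x = 0.
  by move=> gex gxe; rewrite /commutator gex gxe subrr.
exact: (alternating2_eq0 (commutator_xx g) nz_e
  (unit_comm _ gea gae) (unit_comm _ geb gbe)).
Qed.

Section TensorProduct.
Variables (R : realType) (mu : {linear HH R -> H R}).

Definition tensor_mul (x y : H R) : H R := mu (tens x y).

Lemma tensor_mul_is_bilinear :
  bilinear_for (GRing.Scale.Law.clone _ _ *:%R _) (GRing.Scale.Law.clone _ _ *:%R _)
    tensor_mul.
Proof.
split=> [y|x] k u v /=; rewrite /tensor_mul /tens.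
- by rewrite linearP /= mulmxDl -scalemxAl linearP /= linearP.
- by rewrite mulmxDr -scalemxAr linearP /= linearP.
Qed.

HB.instance Definition _ :=
  bilinear_isBilinear.Build _ _ _ _ _ _ tensor_mul tensor_mul_is_bilinear.

End TensorProduct.

Theorem proposition4p2 (R : realType) (M : {pred H R})
  (mu : {linear HH R -> H R}) (e : H R) :
  (* associativity: mu o (mu (x) id) = mu o (id (x) mu), on elementary tensors *)
  (forall a b c : H R,
      mu (tens (mu (tens a b)) c) = mu (tens a (mu (tens b c)))) ->
  e \in M ->
  (forall m, m \in M -> mu (tens e m) = m /\ mu (tens m e) = m) ->
  forall a b, a \in M -> b \in M -> mu (tens a b) = mu (tens b a).
Proof.
move=> _ _ unit_e a b aM bM.
(* Phrasing the unit laws through [tensor_mul] exposes its bilinear instance;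
   unifying [mu (tens _ _)] against it directly is very slow. *)
have [gea gae] : tensor_mul mu e a = a /\ tensor_mul mu a e = a := unit_e a aM.
have [geb gbe] : tensor_mul mu e b = b /\ tensor_mul mu b e = b := unit_e b bM.
exact: (unital_plane_commutative gea gae geb gbe).
Qed.
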